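(* For every $k\ge 0$, $\mathbf F_{k+1}=\mathbf T\,\mathbf F_k$; that is, for every $a$-subset $I$ of $[-b,a-1]$, $\mathbf F_{k+1}[I]=\sum_J \mathbf T[I,J]\,\mathbf F_k[J]$, the sum running over all $a$-subsets $J$ of $[-b,a-1]$.
   Context: Let $S$ be a finite set of integers with $a:=\max S\ge 1$ and $b:=-\min S\ge 1$. Each $s\in S$ carries a weight $\omega_s$ in a field $K$ of characteristic $0$; set $\omega_s:=0$ for $s\in\mathbb Z\setminus S$, and for $s\in\mathbb Z$ put $\beta_s:=\delta_{s,0}-\omega_s$. Notation: $[m,n]:=\{i\in\mathbb Z: m\le i\le n\}$, $\mathbb N=\{0,1,2,\dots\}$, $\mathbb N_{\ge n}:=\{i\in\mathbb Z:i\ge n\}$, $X+c:=\{x+c:x\in X\}$; an $n$-subset is a subset of cardinality $n$. Given an integer $c$ and a finite set $I\subseteq\{i\in\mathbb Z:i<c\}$, an $(I,c)$-permutation of order $k\ge0$ is a bijection $\sigma:\mathbb N\to I\cup\mathbb N_{\ge c}$ with $\sigma(n)=n$ for all $n\ge k$; its number of inversions is $\mathrm{inv}(\sigma)=\#\{(i,j)\in\mathbb N^2:i<j,\ \sigma(i)>\sigma(j)\}$ and its signature is $\epsilon(\sigma)=(-1)^{\mathrm{inv}(\sigma)}$. For an $a$-subset $I$ of $[-b,a-1]$, $\mathfrak S_k^{(I)}$ denotes the (finite) set of $(I,a)$-permutations of order $k$, and for $\sigma\in\mathfrak S_k^{(I)}$, $\beta(\sigma):=\epsilon(\sigma)\prod_{i=0}^{k-1}\beta_{\sigma(i)-i}$.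 $\mathbf F_k$ is the vector indexed by the $a$-subsets of $[-b,a-1]$ with $\mathbf F_k[I]:=\sum_{\sigma\in\mathfrak S_k^{(I)}}\beta(\sigma)$. For a finite set $I\subseteq\mathbb Z$ and $s\in\mathbb Z$, $\epsilon_s(I):=(-1)^{\#\{i\in I:\ i<s\}}$. $\mathbf T$ is the square matrix with rows and columns indexed by the $a$-subsets of $[-b,a-1]$ and entries $\mathbf T[I,J]:=\epsilon_s(I)\beta_s$ if there is an integer $s$ with $I\cup\{a\}=(J+1)\cup\{s\}$ (such $s$ is then unique), and $\mathbf T[I,J]:=0$ otherwise. *)

From HB Require Import structures.
From mathcomp Require Import all_boot all_order all_algebra.
From Stdlib Require Import ClassicalEpsilon.
Set Implicit Arguments. Unset Strict Implicit. Unset Printing Implicit Defensive.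
Import Order.TTheory GRing.Theory Num.Theory.
Local Open Scope ring_scope.

Definition pb (P : Prop) : bool := if excluded_middle_informative P then true else false.

Section Defs.
Variables (K : fieldType) (S : seq int) (omega : int -> K) (a b : nat).

Definition wt (s : int) : K := if s \in S then omega s else 0.
Definition beta (s : int) : K := (s == 0)%:R - wt s.

(* the ordinal i : 'I_n encodes the integer i - b *)
Definition toZ n (i : 'I_n) : int := (nat_of_ord i)%:Z - b%:Z.

(* a subset I of [-b, a-1], encoded by a {set 'I_(a+b)} *)
Definition inZ (I : {set 'I_(a + b)}) (x : int) : Prop :=
  exists2 i, i \in I & toZ i = x.

Definition IcPerm (I : int -> Prop) (c : int) (k : nat) (sigma : nat -> int) : Prop :=
  [/\ forall n : nat, (k <= n)%N -> sigma n = n%:Z,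
      injective sigma,
      forall n, I (sigma n) \/ c <= sigma n
    & forall x, I x \/ c <= x -> exists n, sigma n = x].

(* number of inversions (i,j), i < j, counted for j < N.  For an (I,a)-permutation
   of order k with I in [-b,a-1], every inversion has j < b + a + k. *)
Definition ninv (N : nat) (sigma : nat -> int) : nat :=
  #|[set p : 'I_N * 'I_N | ((p.1 < p.2)%N && (sigma p.2 < sigma p.1))]|.

Definition ext k n (f : {ffun 'I_k -> 'I_n}) (m : nat) : int :=
  odflt (m%:Z) (omap (fun i : 'I_k => toZ (f i)) (insub m)).

(* F_k[I] = sum over S_k^{(I)} of eps(sigma) prod_{i<k} beta_{sigma(i)-i}.
   sigma restricted to [0,k) takes values in [-b, a+k-1], encoded by
   'I_(b+a+k). *)
Definition Fk (k : nat) (I : {set 'I_(a + b)}) : K :=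
  \sum_(f : {ffun 'I_k -> 'I_(b + a + k)}
          | pb (IcPerm (inZ I) (a%:Z) k (ext f)))
     (-1) ^+ (ninv (b + a + k) (ext f)) *
     \prod_(i < k) beta (ext f i - (nat_of_ord i)%:Z).

Definition epsS (I : {set 'I_(a + b)}) (s : int) : K :=
  (-1) ^+ #|[set i in I | toZ i < s]|.

Definition Tcond (I J : {set 'I_(a + b)}) (s : int) : Prop :=
  forall x : int, (inZ I x \/ x = a%:Z) <-> (inZ J (x - 1) \/ x = s).

Definition Tmx (I J : {set 'I_(a + b)}) : K :=
  match excluded_middle_informative (exists s, Tcond I J s) with
  | left H => let s := proj1_sig (constructive_indefinite_description _ H) in
              epsS I s * beta s
  | right _ => 0
  end.

End Defs.

From HB Require Import structures.
From mathcomp Require Import all_boot all_order all_algebra.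
From mathcomp Require Import zify ring.
From Stdlib Require Import ClassicalEpsilon.
Set Implicit Arguments. Unset Strict Implicit. Unset Printing Implicit Defensive.
Import Order.TTheory GRing.Theory Num.Theory.
Local Open Scope ring_scope.

(* Such a sigma of order k+1 is determined by
   its head s = sigma(0) and its shifted tail tau(n) = sigma(n+1) - 1, and tau is a
   (J,a)-permutation of order k exactly for the a-set J with I u {a} = (J+1) u {s},
   i.e. Tcond I J s (IcPerm_cons, IcPerm_uncons).  Along this correspondence the
   inversions of sigma are those of tau plus the #{i in I | i < s} pairs involving
   the head (ninv_cons, head_inversions), so the weight of sigma factors as
   eps_s(I) beta_s * weight(tau) = T[I,J] * weight(tau) (weight_cons).  Permutations
   whose head exceeds a or whose tail reaches -b have weight 0, because beta
   vanishes outside [-b, a]; the remaining ones are in bijection with the pairs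
   (J, tau) with Tcond I J s for some s (joinPair_spec, splitPerm_spec), and
   reindexing the sum along this bijection gives the theorem (Fk_step). *)

Lemma IcPerm_cons (PI PJ : int -> Prop) (c s : int) k (sg tau : nat -> int) :
  sg 0%N = s -> (forall n, sg n.+1 = tau n + 1) ->
  IcPerm PJ c k tau -> (forall x, (PI x \/ x = c) <-> (PJ (x - 1) \/ x = s)) ->
  ~ PJ (s - 1) -> s <= c -> IcPerm PI c k.+1 sg.
Proof.
move=> h0 hS [tfix tinj trng tsurj] hT hs hsc; split.
- by case=> [//|n] hn; rewrite hS tfix //; lia.
- case=> [|m] [|n] //; rewrite ?h0 ?hS => e.
  + have [hj|] := trng n; last by lia.
    by case: hs; rewrite e addrK.
  + have [hj|] := trng m; last by lia.
    by case: hs; rewrite -e addrK.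
  + by congr S; apply: tinj; move: e => /addIr.
- case=> [|n]; rewrite ?h0 ?hS.
  + have /hT [hj|->] : PJ (s - 1) \/ s = s by right.
      by left.
    by right.
  + have [hj|hj] := trng n; last by right; lia.
    have /hT [|->] : PJ (tau n + 1 - 1) \/ tau n + 1 = s by left; rewrite addrK.
      by left.
    by right.
- move=> x hx.
  have [hx'|hx'] : (PI x \/ x = c) \/ c + 1 <= x.
    case: hx => [h|h]; first by left; left.
    by have [->|?] := eqVneq x c; [left; right|right; lia].
  + have [hj|->] := proj1 (hT x) hx'; last by exists 0%N.
    by have [n hn] := tsurj _ (or_introl hj); exists n.+1; rewrite hS hn subrK.
  + have [n hn] := tsurj (x - 1) (or_intror (ltac:(lia) : c <= x - 1)).
    by exists n.+1; rewrite hS hn subrK.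
Qed.

Lemma IcPerm_uncons (PI PJ : int -> Prop) (c s : int) k (sg tau : nat -> int) :
  sg 0%N = s -> (forall n, sg n.+1 = tau n + 1) ->
  IcPerm PI c k.+1 sg -> s <= c ->
  (forall y, PJ y <-> ((PI (y + 1) \/ y + 1 = c) /\ y + 1 <> s)) ->
  IcPerm PJ c k tau /\ (forall x, (PI x \/ x = c) <-> (PJ (x - 1) \/ x = s)).
Proof.
move=> h0 hS [sfix sinj srng ssurj] hsc hJ.
have tE n : tau n = sg n.+1 - 1 by rewrite hS addrK.
have tail_ne_head n : sg n.+1 <> s by rewrite -h0 => /sinj.
split; first split.
- by move=> n hn; rewrite tE sfix //; lia.
- by move=> m n; rewrite !tE => /addIr /sinj [].
- move=> n; rewrite tE.
  have [h|h] := srng n.+1.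
    by left; apply/hJ; rewrite subrK; split; [left|apply: tail_ne_head].
  have [e|?] := eqVneq (sg n.+1) c; last by right; lia.
  by left; apply/hJ; rewrite subrK; split; [right|apply: tail_ne_head].
- move=> x hx.
  have hx1 : PI (x + 1) \/ c <= x + 1.
    case: hx => [/hJ [[h|h] _]|h]; [by left|right; lia|right; lia].
  have [[|n] hn] := ssurj (x + 1) hx1; last by exists n; rewrite tE hn addrK.
  rewrite h0 in hn; case: hx => [/hJ [_ []]//|]; lia.
- move=> x; split.
  + move=> hx; have [->|ne] := eqVneq x s; first by right.
    by left; apply/hJ; rewrite subrK; split => // /eqP; rewrite (negbTE ne).
  + case=> [/hJ [] | ->]; first by rewrite subrK.
    by have := srng 0%N; rewrite h0 => -[h|h]; [left|right; lia].
Qed.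

Lemma card_set_sum (T : finType) (P : pred T) :
  #|[set x | P x]| = (\sum_(x : T) P x)%N.
Proof.
rewrite -sum1_card (big_mkcond (fun x => x \in _)) /=.
by apply: eq_bigr => x _; rewrite inE; case: (P x).
Qed.

Lemma ninv_sum N sg :
  ninv N sg = (\sum_(i < N) \sum_(j < N) ((i < j)%N && (sg j < sg i)%R))%N.
Proof. by rewrite /ninv card_set_sum pair_bigA. Qed.

Lemma ninv_cons N (sg tau : nat -> int) : (forall n, sg n.+1 = tau n + 1) ->
  ninv N.+1 sg = (#|[set j : 'I_N | (sg j.+1 < sg 0%N)%R]| + ninv N tau)%N.
Proof.
move=> hS; rewrite !ninv_sum card_set_sum big_ord_recl /=.
rewrite big_ord_recl /= add0n /bump /=; congr (_ + _)%N.
apply: eq_bigr => i _; rewrite big_ord_recl /= add0n.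
by apply: eq_bigr => j _; rewrite /bump /= !add1n ltnS !hS ltrD2r.
Qed.

Lemma pbP (P : Prop) : reflect P (pb P).
Proof. by rewrite /pb; case: excluded_middle_informative => h; constructor. Qed.

(* The ordinal i : 'I_n stands for the integer i - b, so a set J : {set 'I_(a+b)}
   stands for a subset of [-b, a-1] and f : 'I_k -> 'I_n for the function
   ext b f : N -> Z that is the identity from k on. *)
Section Encoding.
Context {a b : nat}.

Lemma toZ_ge n (i : 'I_n) : - b%:Z <= toZ b i.
Proof. by rewrite /toZ; lia. Qed.

Lemma toZ_lt (i : 'I_(a + b)) : toZ b i < a%:Z.
Proof. by have := ltn_ord i; rewrite /toZ; lia. Qed.

Lemma toZ_inj n : injective (@toZ b n).
Proof. by move=> i j; rewrite /toZ => h; apply: val_inj => /=; lia. Qed.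

Lemma toZ_onto (y : int) :
  - b%:Z <= y -> y < a%:Z -> exists j : 'I_(a + b), toZ b j = y.
Proof.
move=> h1 h2; have hy : (absz (y + b%:Z)%R < a + b)%N by lia.
by exists (Ordinal hy); rewrite /toZ /=; lia.
Qed.

Lemma inZ_mem (X : {set 'I_(a + b)}) x :
  inZ X x <-> x \in map (@toZ b _) (enum X).
Proof.
split; first by case=> i hi <-; apply: map_f; rewrite mem_enum.
by case/mapP => i; rewrite mem_enum => hi ->; exists i.
Qed.

Definition succList (X : {set 'I_(a + b)}) : seq int :=
  map (fun i => toZ b i + 1) (enum X).

Lemma inZ_pred_mem (X : {set 'I_(a + b)}) x : inZ X (x - 1) <-> x \in succList X.
Proof.
split; first by case=> i hi e; apply/mapP; exists i; rewrite ?mem_enum // e subrK.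
by case/mapP => i; rewrite mem_enum => hi ->; exists i; rewrite ?addrK.
Qed.

Lemma uniq_toZ (X : {set 'I_(a + b)}) : uniq (map (@toZ b _) (enum X)).
Proof. by rewrite map_inj_uniq ?enum_uniq //; apply: toZ_inj. Qed.

Lemma uniq_succList (X : {set 'I_(a + b)}) : uniq (succList X).
Proof. by rewrite map_inj_uniq ?enum_uniq // => i j /addIr /toZ_inj. Qed.

Lemma a_notin_toZ (X : {set 'I_(a + b)}) : a%:Z \notin map (@toZ b _) (enum X).
Proof. by apply/mapP => -[i _ e]; have := toZ_lt i; rewrite -e ltxx. Qed.

Definition withTop (X : {set 'I_(a + b)}) : seq int :=
  a%:Z :: map (@toZ b _) (enum X).

Lemma uniq_withTop X : uniq (withTop X).
Proof. by rewrite /= a_notin_toZ uniq_toZ. Qed.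

Lemma mem_withTop X x : x \in withTop X <-> inZ X x \/ x = a%:Z.
Proof.
rewrite inE; split.
  by case/orP => [/eqP|/inZ_mem]; [right|left].
by case=> [/inZ_mem ->|->]; rewrite ?eqxx ?orbT.
Qed.

Lemma ext_lt k n (f : {ffun 'I_k -> 'I_n}) m (h : (m < k)%N) :
  ext b f m = toZ b (f (Ordinal h)).
Proof. by rewrite /ext insubT /=; congr (toZ _ (f _)); apply: val_inj. Qed.

Lemma ext_ord k n (f : {ffun 'I_k -> 'I_n}) (i : 'I_k) : ext b f i = toZ b (f i).
Proof. by rewrite (ext_lt _ (ltn_ord i)); congr (toZ _ (f _)); apply: val_inj. Qed.

Lemma ext0 k n (f : {ffun 'I_k.+1 -> 'I_n}) : ext b f 0 = toZ b (f ord0).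
Proof. exact: ext_ord f ord0. Qed.

Lemma ext_id k n (f : {ffun 'I_k -> 'I_n}) m : (k <= m)%N -> ext b f m = m%:Z.
Proof. by move=> h; rewrite /ext insubF // ltnNge h. Qed.

Lemma ext_ge k n (f : {ffun 'I_k -> 'I_n}) m : - b%:Z <= ext b f m.
Proof.
have [h|h] := ltnP m k; first by rewrite (ext_lt _ h) toZ_ge.
by rewrite ext_id //; lia.
Qed.

End Encoding.

Section Transfer.
Variables (a b : nat) (I : {set 'I_(a + b)}).

(* The head s lies in I u {a}, hence in [-b, a]. *)
Lemma Tcond_range (J : {set 'I_(a + b)}) (s : int) :
  Tcond I J s -> - b%:Z <= s /\ s <= a%:Z.
Proof.
move=> hT; have [[i hi <-]|->] := proj2 (hT s) (or_intror erefl).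
  by rewrite toZ_ge; have := toZ_lt i; split => //; lia.
by split => //; lia.
Qed.

Hypothesis hI : #|I| = a.

Lemma size_withTop : size (withTop I) = a.+1.
Proof. by rewrite /= size_map -cardE hI. Qed.

Lemma card_removed (J : {set 'I_(a + b)}) (s : int) :
  (forall y, inZ J y <-> ((inZ I (y + 1) \/ y + 1 = a%:Z) /\ y + 1 <> s)) ->
  (inZ I s \/ s = a%:Z) -> #|J| = a.
Proof.
move=> hJ /mem_withTop hs.
have eqJ : succList J =i rem s (withTop I).
  move=> x; rewrite mem_rem_uniq ?uniq_withTop // inE.
  apply/idP/idP.
    by move/inZ_pred_mem/hJ; rewrite subrK => -[/mem_withTop -> /eqP ->].
  case/andP => /eqP h1 /mem_withTop h2; apply/inZ_pred_mem/hJ.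
  by rewrite subrK.
rewrite cardE -(size_map (fun i => toZ b i + 1)) -/(succList J).
rewrite (perm_size (uniq_perm (uniq_succList J) _ eqJ)) ?rem_uniq ?uniq_withTop //.
by rewrite size_rem // size_withTop.
Qed.

(* When Tcond I J s holds for an a-set J, the head s is not already in J+1:
   otherwise J+1 would be all of I u {a}, which has a+1 elements. *)
Lemma Tcond_head_new (J : {set 'I_(a + b)}) (s : int) :
  Tcond I J s -> #|J| = a -> ~ inZ J (s - 1).
Proof.
move=> hT hJ hs.
have eqJ : succList J =i withTop I.
  move=> x; apply/idP/idP => [/inZ_pred_mem hx | /mem_withTop /hT hx].
    by apply/mem_withTop/hT; left.
  by apply/inZ_pred_mem; case: hx => [|->].
have := perm_size (uniq_perm (uniq_succList J) (uniq_withTop I) eqJ).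
by rewrite size_map -cardE hJ size_withTop; lia.
Qed.

(* The head is determined by I and the a-set J; this makes T well defined. *)
Lemma Tcond_unique (J : {set 'I_(a + b)}) (s s' : int) :
  Tcond I J s -> Tcond I J s' -> #|J| = a -> s' = s.
Proof.
move=> hT hT' hJ.
have [hs'|//] := proj1 (hT s') (proj2 (hT' s') (or_intror erefl)).
by case: (Tcond_head_new hT' hJ).
Qed.

Definition missingHead (J : {set 'I_(a + b)}) : int :=
  head 0 [seq x <- withTop I | x \notin succList J].

Lemma missingHead_spec (J : {set 'I_(a + b)}) (s : int) :
  Tcond I J s -> #|J| = a -> missingHead J = s.
Proof.
move=> hT hJ.
have others x : x \in withTop I -> x \notin succList J -> x = s.
  by move=> /mem_withTop /hT [/inZ_pred_mem ->|].
have s_missing : s \in [seq x <- withTop I | x \notin succList J].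
  rewrite mem_filter; apply/andP; split.
    by apply/negP => /inZ_pred_mem; apply: Tcond_head_new.
  by apply/mem_withTop/hT; right.
rewrite /missingHead; case E: [seq _ <- _ | _] s_missing => [//|y l] _ /=.
have : y \in [seq x <- withTop I | x \notin succList J] by rewrite E mem_head.
by rewrite mem_filter => /andP [hy1 hy2]; apply: others.
Qed.

End Transfer.

Section Recursion.
Variables (K : fieldType) (S : seq int) (omega : int -> K) (a b : nat).
Hypotheses (hb : (1 <= b)%N) (hamax : forall s, s \in S -> s <= a%:Z)
  (hbmin : forall s, s \in S -> - b%:Z <= s).

Local Notation bt := (beta S omega).

Lemma beta_out s : s < - b%:Z \/ a%:Z < s -> bt s = 0.
Proof.
move=> hs; rewrite /beta /wt.
have -> : (s \in S) = false by apply/negP => /[dup] /hamax ? /hbmin ?; lia.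
have -> : (s == 0) = false by apply/eqP; lia.
by rewrite subr0.
Qed.

Definition weight k (f : {ffun 'I_k -> 'I_(b + a + k)}) : K :=
  (-1) ^+ ninv (b + a + k) (ext b f) *
  \prod_(i < k) bt (ext b f i - (nat_of_ord i)%:Z).

Lemma Fk_weight k (J : {set 'I_(a + b)}) :
  Fk S omega k J = \sum_(f : {ffun 'I_k -> 'I_(b + a + k)} | pb (IcPerm (inZ J) a%:Z k (ext b f)))
      weight f.
Proof. by []. Qed.

Lemma weight_eq0 k (f : {ffun 'I_k -> 'I_(b + a + k)}) (i : 'I_k) :
  bt (ext b f i - (nat_of_ord i)%:Z) = 0 -> weight f = 0.
Proof. by move=> h; rewrite /weight (bigD1 i) //= h mul0r mulr0. Qed.

Section Step.
Variables (k : nat) (I : {set 'I_(a + b)}).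
Hypothesis hI : #|I| = a.

Local Notation perm k := {ffun 'I_k -> 'I_(b + a + k)}.

Lemma ord0_lt : (0 < b + a + k.+1)%N. Proof. by rewrite addnS. Qed.

Lemma succ_lt (x : 'I_(b + a + k)) : (x.+1 < b + a + k.+1)%N.
Proof. by rewrite addnS ltnS. Qed.

Lemma pred_lt (x : 'I_(b + a + k.+1)) : (x.-1 < b + a + k)%N.
Proof. by have := ltn_ord x; have := addnS (b + a) k; lia. Qed.

Definition encodeHead (s : int) : 'I_(b + a + k.+1) :=
  insubd (Ordinal ord0_lt) (absz (s + b%:Z)%R).

Lemma toZ_encodeHead s : - b%:Z <= s -> s <= a%:Z -> toZ b (encodeHead s) = s.
Proof.
move=> h1 h2; rewrite /toZ /encodeHead val_insubd.
by case: ifP => h; [lia|move/negbT: h; rewrite -leqNgt; lia].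
Qed.

Definition joinPerm (s : int) (g : perm k) : perm k.+1 :=
  [ffun i => if unlift ord0 i is Some j then Ordinal (succ_lt (g j))
             else encodeHead s].

Definition tailPerm (f : perm k.+1) : perm k :=
  [ffun i => Ordinal (pred_lt (f (lift ord0 i)))].

Lemma joinPerm_head s g : - b%:Z <= s -> s <= a%:Z -> ext b (joinPerm s g) 0 = s.
Proof. by move=> h1 h2; rewrite ext0 ffunE unlift_none toZ_encodeHead. Qed.

Lemma joinPerm_tail s g n : ext b (joinPerm s g) n.+1 = ext b g n + 1.
Proof.
have [h|h] := ltnP n k; last by rewrite !ext_id //; lia.
rewrite (ext_lt _ (h : (n.+1 < k.+1)%N)) (ext_lt _ h).
have -> : Ordinal (h : (n.+1 < k.+1)%N) = lift ord0 (Ordinal h) by apply: val_inj.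
by rewrite ffunE liftK /toZ /=; lia.
Qed.

Lemma tailPerm_shift (f : perm k.+1) n : (forall m, (0 < m)%N -> - b%:Z < ext b f m) ->
  ext b f n.+1 = ext b (tailPerm f) n + 1.
Proof.
move=> hf; have [h|h] := ltnP n k; last by rewrite !ext_id //; lia.
have := hf n.+1 isT; rewrite (ext_lt _ (h : (n.+1 < k.+1)%N)) (ext_lt _ h).
have -> : Ordinal (h : (n.+1 < k.+1)%N) = lift ord0 (Ordinal h) by apply: val_inj.
by rewrite ffunE /toZ /=; lia.
Qed.

Lemma head_inversions (sg : nat -> int) :
  IcPerm (inZ I) a%:Z k.+1 sg -> sg 0%N <= a%:Z ->
  #|[set j : 'I_(b + a + k) | (sg j.+1 < sg 0%N)%R]| =
  #|[set i in I | toZ b i < sg 0%N]|.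
Proof.
move=> [sfix sinj srng ssurj] hsa.
rewrite !cardE -(size_map (fun j : 'I_(b + a + k) => sg j.+1)) -(size_map (@toZ b _)).
apply/perm_size/uniq_perm.
- by rewrite map_inj_uniq ?enum_uniq // => i j /sinj [] /val_inj.
- by rewrite map_inj_uniq ?enum_uniq //; apply: toZ_inj.
move=> x; apply/mapP/mapP.
  case=> j; rewrite mem_enum inE => hj ->.
  have [[i hi e]|h] := srng j.+1; last lia.
  by exists i; rewrite ?mem_enum ?inE ?hi ?e.
case=> i; rewrite mem_enum inE => /andP [hi hs] ->.
have [[|m] hm] := ssurj (toZ b i) (or_introl (ex_intro2 _ _ i hi erefl)).
  by move: hs; rewrite -hm ltxx.
have hmN : (m < b + a + k)%N.
  have [hk|hk] := ltnP m k; first lia.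
  by move: hm; rewrite sfix // => hm; have := toZ_lt i; lia.
by exists (Ordinal hmN); rewrite ?mem_enum ?inE /= ?hm.
Qed.

Lemma weight_cons (f : perm k.+1) (g : perm k) :
  (forall n, ext b f n.+1 = ext b g n + 1) -> IcPerm (inZ I) a%:Z k.+1 (ext b f) ->
  ext b f 0 <= a%:Z ->
  weight f = epsS K I (ext b f 0) * bt (ext b f 0) * weight g.
Proof.
move=> hS hP hs; rewrite /weight.
have -> : ninv (b + a + k.+1) (ext b f) = ninv (b + a + k).+1 (ext b f).
  exact: (congr1 (fun N => ninv N (ext b f)) (addnS _ _)).
rewrite /epsS (ninv_cons _ hS) (head_inversions hP hs) exprD.
rewrite big_ord_recl /= subr0.
have -> : \prod_(i < k) bt (ext b f (lift ord0 i) - (nat_of_ord (lift ord0 i))%:Z) =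
          \prod_(i < k) bt (ext b g i - (nat_of_ord i)%:Z).
  by apply: eq_bigr => i _; rewrite lift0 hS; congr bt; lia.
ring.
Qed.

Lemma Tmx_cond (J : {set 'I_(a + b)}) (s : int) :
  Tcond I J s -> #|J| = a -> Tmx S omega I J = epsS K I s * bt s.
Proof.
move=> hT hJ; rewrite /Tmx; case: excluded_middle_informative => [H|[]]; last by exists s.
by rewrite (Tcond_unique hI hT (proj2_sig (constructive_indefinite_description _ H)) hJ).
Qed.

Lemma Tmx_eq0 (J : {set 'I_(a + b)}) : ~ (exists s, Tcond I J s) -> Tmx S omega I J = 0.
Proof. by rewrite /Tmx; case: excluded_middle_informative. Qed.

Lemma weight_head (f : perm k.+1) : weight f != 0 -> ext b f 0 <= a%:Z.
Proof.
move=> hw; rewrite leNgt; apply/negP => h; move/eqP: hw; apply.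
by apply: (@weight_eq0 _ _ ord0); rewrite subr0; apply: beta_out; right.
Qed.

Lemma weight_tail (f : perm k.+1) :
  weight f != 0 -> forall m, (0 < m)%N -> - b%:Z < ext b f m.
Proof.
move=> hw m hm; have [h|h] := ltnP m k.+1; last by rewrite ext_id //; lia.
rewrite ltNge; apply/negP => hle; move/eqP: hw; apply.
apply: (@weight_eq0 _ _ (Ordinal h)); apply: beta_out; left => /=; lia.
Qed.

Definition tailSet (f : perm k.+1) : {set 'I_(a + b)} :=
  [set j | (toZ b j + 1 \in withTop I) && (toZ b j + 1 != ext b f 0)].

Lemma tailSet_spec (f : perm k.+1) :
  (forall m, (0 < m)%N -> - b%:Z < ext b f m) ->
  IcPerm (inZ I) a%:Z k.+1 (ext b f) ->
  forall y, inZ (tailSet f) y <->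
            ((inZ I (y + 1) \/ y + 1 = a%:Z) /\ y + 1 <> ext b f 0).
Proof.
move=> htail [_ _ _ ssurj] y; split.
  by case=> j; rewrite inE => /andP [/mem_withTop h1 /eqP h2] <-.
move=> [h1 h2].
have hy : - b%:Z < y + 1 /\ y + 1 <= a%:Z.
  case: h1 => [hi|->]; last by lia.
  split; last by case: hi => i _ <-; have := toZ_lt i; lia.
  have [[|m] hm] := ssurj _ (or_introl hi); first by case: h2.
  by rewrite -hm; apply: htail.
have [j e] := toZ_onto (ltac:(lia) : - b%:Z <= y) (ltac:(lia) : y < a%:Z).
exists j => //; rewrite inE e; apply/andP; split; [exact/mem_withTop|exact/eqP].
Qed.

Lemma tailSet_joinPerm (J : {set 'I_(a + b)}) (s : int) (g : perm k) :
  Tcond I J s -> ~ inZ J (s - 1) -> - b%:Z <= s -> s <= a%:Z ->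
  tailSet (joinPerm s g) = J.
Proof.
move=> hT hnew hs1 hs2; apply/setP => j; rewrite inE joinPerm_head //.
have [hl hr] := hT (toZ b j + 1); rewrite addrK in hl hr.
apply/andP/idP => [[/mem_withTop /hl [[j' hj' /toZ_inj <-]//|->] /eqP //] | hj].
split; first by apply/mem_withTop/hr; left; exists j.
by apply/eqP => e; apply: hnew; rewrite -e addrK; exists j.
Qed.

(* Pairs (J, tau) contributing to (T F_k)[I], and the two inverse maps between
   them and the (I,a)-permutations of order k+1 of nonzero weight. *)
Definition admissible (p : {set 'I_(a + b)} * perm k) : bool :=
  [&& #|p.1| == a, pb (IcPerm (inZ p.1) a%:Z k (ext b p.2))
    & pb (exists s, Tcond I p.1 s)].

Definition joinPair (p : {set 'I_(a + b)} * perm k) : perm k.+1 :=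
  joinPerm (missingHead I p.1) p.2.

Definition splitPerm (f : perm k.+1) : {set 'I_(a + b)} * perm k :=
  (tailSet f, tailPerm f).

Lemma joinPair_spec p : admissible p ->
  [/\ pb (IcPerm (inZ I) a%:Z k.+1 (ext b (joinPair p))),
      weight (joinPair p) = Tmx S omega I p.1 * weight p.2
    & splitPerm (joinPair p) = p].
Proof.
case: p => J g /and3P [/= /eqP hJ /pbP hP /pbP [s hT]].
rewrite /joinPair /= (missingHead_spec hI hT hJ).
have [hs1 hs2] := Tcond_range hT.
have hnew := Tcond_head_new hI hT hJ.
have h0 := joinPerm_head g hs1 hs2.
have hS := joinPerm_tail s g.
have hPI := IcPerm_cons h0 hS hP hT hnew hs2.
split; first exact/pbP.
  by rewrite (weight_cons hS hPI) h0 // (Tmx_cond hT hJ).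
rewrite /splitPerm (tailSet_joinPerm g hT hnew hs1 hs2); congr pair.
by apply/ffunP => i; rewrite !ffunE; apply: val_inj; rewrite /= liftK.
Qed.

Lemma splitPerm_spec (f : perm k.+1) :
  pb (IcPerm (inZ I) a%:Z k.+1 (ext b f)) -> weight f != 0 ->
  admissible (splitPerm f) && (joinPair (splitPerm f) == f).
Proof.
move=> /pbP hP hw.
have htail := weight_tail hw.
have hS n := tailPerm_shift n htail.
have hJ := tailSet_spec htail hP.
have [hPJ hT] := IcPerm_uncons (erefl _) hS hP (weight_head hw) hJ.
have hcard := card_removed hI hJ (proj2 (hT _) (or_intror erefl)).
apply/andP; split; first by apply/and3P; split; [exact/eqP|exact/pbP|apply/pbP; exists (ext b f 0)].
apply/eqP/ffunP => i; rewrite /joinPair /= (missingHead_spec hI hT hcard) ffunE.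
case: unliftP => [j|] ->.
  apply: val_inj; rewrite /= ffunE /= prednK //.
  by have := htail (lift ord0 j) isT; rewrite ext_ord /toZ; lia.
by apply: (@toZ_inj b); rewrite toZ_encodeHead -?ext0 ?ext_ge ?weight_head.
Qed.

Lemma Fk_step :
  Fk S omega k.+1 I =
  \sum_(J : {set 'I_(a + b)} | #|J| == a) Tmx S omega I J * Fk S omega k J.
Proof.
transitivity (\sum_(p | admissible p) Tmx S omega I p.1 * weight p.2); last first.
  under [RHS]eq_bigr => J _ do rewrite Fk_weight big_distrr.
  rewrite pair_big_dep /= [RHS](bigID (fun p => pb (exists s, Tcond I p.1 s))) /=.
  rewrite [X in _ = _ + X]big1 ?addr0; last first.
    by move=> p /andP [_ /pbP h]; rewrite Tmx_eq0 ?mul0r.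
  by apply: eq_bigl => p; rewrite /admissible andbA.
rewrite Fk_weight (reindex_onto splitPerm joinPair); last first.
  by move=> p /joinPair_spec [].
rewrite big_mkcond [RHS]big_mkcond; apply: eq_bigr => f _.
case E: (admissible (splitPerm f) && (joinPair (splitPerm f) == f)).
  move/andP: E => [/joinPair_spec [h1 h2 _] /eqP hf].
  by rewrite hf in h1 h2; rewrite h1 h2.
case: ifP => // hP; have [//|hw] := eqVneq (weight f) 0.
by rewrite splitPerm_spec in E.
Qed.

End Step.
End Recursion.

Theorem mainTheorem3 (K : fieldType) (Kchar0 : [pchar K] =i pred0)
  (S : seq int) (omega : int -> K) (a b : nat)
  (ha : (1 <= a)%N) (hb : (1 <= b)%N)
  (haS : a%:Z \in S) (hamax : forall s, s \in S -> s <= a%:Z)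
  (hbS : - b%:Z \in S) (hbmin : forall s, s \in S -> - b%:Z <= s)
  (k : nat) (I : {set 'I_(a + b)}) (hI : #|I| = a) :
  Fk S omega (k.+1) I =
  \sum_(J : {set 'I_(a + b)} | #|J| == a) Tmx S omega I J * Fk S omega k J.
Proof. exact (Fk_step omega hb hamax hbmin k hI). Qed.
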